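(* Let $A$ be an entrywise non-negative $d\times d$ matrix with $\rho(A)<1$, let $M=(I-A^T)(I-A)$, and let $\mu$ be the smallest eigenvalue of $M$. Then $\mu>0$ and $M$ has an entrywise non-negative eigenvector $\mathbf v$ with $\|\mathbf v\|=1$ associated with $\mu$. Moreover, with $r=\sqrt\mu$, the vector $\mathbf u=\frac1r(I-A)\mathbf v$ and the matrix $X=A+r\,\mathbf u\,\mathbf v^T$ are both entrywise non-negative, $\rho(X)\ge 1$, $\|X-A\|=r$, and for every real $d\times d$ matrix $Y$ with $\rho(Y)\ge 1$ one has $\|Y-A\|\ge r$. In other words, $X$ is a closest matrix to $A$ (among all real matrices) with spectral radius at least one, and it is non-negative.
   Context: $\rho(\cdot)$ denotes the spectral radius. For matrices, $\|X\|=\sqrt{\operatorname{tr}(X^TX)}=\sqrt{\sum_{i,j}x_{ij}^2}$ is the Frobenius norm; for vectors, $\|\cdot\|$ is the Euclidean norm. Inequalities between vectors or matrices are entrywise. *)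

(* Real matrices are modelled as matrices over a numeric
   closed field C (e.g. algC, the complex numbers) all of whose entries are real;
   eigenvalues are taken in C, as for the complex spectrum of a real matrix. *)
From HB Require Import structures.
From mathcomp Require Import all_boot all_order all_algebra.
Set Implicit Arguments. Unset Strict Implicit. Unset Printing Implicit Defensive.
Import Order.TTheory GRing.Theory Num.Theory.
Local Open Scope ring_scope.

Section Defs.
Variable C : numClosedFieldType.

Definition real_entries_mx m n (X : 'M[C]_(m, n)) : Prop :=
  forall i j, X i j \is Num.real.

Definition nonnegmx m n (X : 'M[C]_(m, n)) : Prop :=
  forall i j, 0 <= X i j.

Definition frob m n (X : 'M[C]_(m, n)) : C :=
  sqrtC (\sum_(i < m) \sum_(j < n) X i j ^+ 2).

Definition spec_rad_lt d (X : 'M[C]_d) (c : C) : Prop :=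
  forall l, eigenvalue X l -> `|l| < c.

Definition spec_rad_ge d (X : 'M[C]_d) (c : C) : Prop :=
  exists l, eigenvalue X l /\ c <= `|l|.

Definition smallest_eigenvalue d (X : 'M[C]_d) (mu : C) : Prop :=
  eigenvalue X mu /\ forall l, eigenvalue X l -> mu <= l.

End Defs.

(* Since A >= 0 has no real eigenvalue >= 1, B = I - A and B^T are monotone:
   B x >= 0 implies x >= 0 (induction on the dimension through the Schur
   complement of the lower block).  The smallest eigenvalue mu of M = B^T B
   minimizes |B x|^2 / |x|^2.  If |l| >= 1 and B h = |(l I - A) z|,
   monotonicity gives h >= |z|.  With l = 1 and z an eigenvector for mu, h has
   no larger Rayleigh quotient, hence is a nonnegative eigenvector v;
   u = B v / sqrt mu >= 0 since B^T u = sqrt mu v, and X = A + sqrt mu u v^T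
   fixes v.  If Y w = l w with |l| >= 1, the same h for z = w gives
   mu |w|^2 <= mu |h|^2 <= |B h|^2 = |(Y - A) w|^2 <= |Y - A|^2 |w|^2. *)

From HB Require Import structures.
From mathcomp Require Import all_boot all_order all_algebra.
From mathcomp Require Import ring.

Set Implicit Arguments. Unset Strict Implicit. Unset Printing Implicit Defensive.
Import Order.TTheory GRing.Theory Num.Theory Num.Def.
Local Open Scope ring_scope.
Local Open Scope sesquilinear_scope.

Section RealPolynomials.
Variable C : numClosedFieldType.
Implicit Types (p q : {poly C}) (s t x z : C).

Lemma real_poly_factor_real_root p z : map_poly conjC p = p -> root p z ->
  z \is Num.real -> exists2 q, map_poly conjC q = q & p = q * ('X - z%:P).
Proof.
move=> pR pz zR; have [q pq] := factor_theorem _ _ pz; exists q => //.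
apply: (mulIf (negbT (polyXsubC_eq0 z))); move: pR.
by rewrite pq rmorphM /= rmorphB /= map_polyX map_polyC /= (conj_Creal zR).
Qed.

Lemma real_poly_factor_conj_pair p z : map_poly conjC p = p -> root p z ->
  z \isn't Num.real ->
  exists2 q, map_poly conjC q = q & p = q * (('X - z^*%:P) * ('X - z%:P)).
Proof.
move=> pR pz zNR; have [q pq] := factor_theorem _ _ pz.
have qzC : root q z^*.
  have : root p z^* by rewrite /root -pR horner_map (eqP pz) rmorph0.
  rewrite pq rootM root_XsubC => /orP [//|/eqP zCz].
  by move: zNR; rewrite CrealE zCz eqxx.
have [q2 qq2] := factor_theorem _ _ qzC; exists q2; last by rewrite pq qq2 mulrA.
set Q := ('X - z^*%:P) * ('X - z%:P).
have QR : map_poly conjC Q = Q.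
  by rewrite /Q rmorphM /= !rmorphB /= !map_polyX !map_polyC /= conjCK mulrC.
apply: (mulIf (_ : Q != 0)); first by rewrite mulf_neq0 ?polyXsubC_eq0.
by move: pR; rewrite pq qq2 -mulrA rmorphM /= QR.
Qed.

(* Each real root z < t contributes a factor t - z > 0 and each pair of
   conjugate non-real roots a factor |t - z|^2 > 0. *)
Lemma monic_real_poly_gt0 p t : t \is Num.real -> p \is monic ->
  map_poly conjC p = p ->
  (forall z, root p z -> z \is Num.real -> z < t) -> 0 < p.[t].
Proof.
move=> tR; have [n] := ubnP (size p); elim: n p => // n IHn p.
rewrite ltnS => sp pm pR rootsp.
have [/eqP sp1|/closed_rootP [z pz]] := eqVneq (size p) 1%N.
  have /size_poly1P [c _ pc] : size p == 1%N by rewrite sp1.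
  by move: pm; rewrite monicE pc lead_coefC => /eqP ->; rewrite hornerC ltr01.
have IHq q r : p = q * r -> r \is monic -> (1 < size r)%N ->
    map_poly conjC q = q -> 0 < q.[t].
  move=> pqr rm sr qR; have qm : q \is monic by move: pm; rewrite pqr monicMr.
  apply: IHn => //; last by move=> y qy; apply: rootsp; rewrite pqr rootM qy.
  move: sp; rewrite pqr size_mul ?monic_neq0 // -subn1 => h.
  apply: leq_trans _ h; rewrite -(addnBA _ (ltnW sr)) -{1}[size q]addn0.
  by rewrite ltn_add2l subn_gt0.
have [zR|zNR] := boolP (z \is Num.real).
  have [q qR pq] := real_poly_factor_real_root pR pz zR.
  rewrite pq hornerM hornerXsubC mulr_gt0 ?subr_gt0 ?rootsp //.
  by apply: (IHq _ _ pq); rewrite ?monicXsubC ?size_XsubC.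
have [q qR pq] := real_poly_factor_conj_pair pR pz zNR.
have tzC : t - z^* = (t - z)^* by rewrite rmorphB /= (conj_Creal tR).
rewrite pq !hornerM !hornerXsubC tzC [_^* * _]mulrC mulr_gt0 ?mul_conjC_gt0 //.
- apply: (IHq _ _ pq); rewrite ?monicMr ?monicXsubC //.
  by rewrite size_mul ?polyXsubC_eq0 ?size_XsubC.
- by rewrite subr_eq0; apply: contraNneq zNR => <-.
Qed.

Lemma exists_max_real (s : seq C) : s != [::] -> all (mem Num.real) s ->
  exists2 m, m \in s & forall z, z \in s -> z <= m.
Proof.
elim: s => // a s IHs _ /= /andP [aR sR].
have [-> | s0] := eqVneq s [::].
  by exists a; rewrite ?mem_head // => z; rewrite inE => /eqP ->.
have [m ms maxm] := IHs s0 sR.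
have mR : m \is Num.real by apply: (allP sR).
have [am | ma] := real_leP aR mR.
  exists m; first by rewrite inE ms orbT.
  by move=> z; rewrite inE => /orP [/eqP -> | /maxm].
exists a; first exact: mem_head.
by move=> z; rewrite inE => /orP [/eqP -> // | /maxm zm]; rewrite (le_trans zm) ?ltW.
Qed.

Lemma max_real_root p s : p != 0 -> root p s -> s \is Num.real ->
  exists s0, [/\ s0 \is Num.real, root p s0, s <= s0 &
    forall z, root p z -> z \is Num.real -> z <= s0].
Proof.
move=> p0 ps sR; have [r pr] := closed_field_poly_normal p.
have rootE z : root p z = (z \in r).
  by rewrite pr rootZ ?lead_coef_eq0 // root_prod_XsubC.
set P := fun z => (z \is Num.real) && (s <= z).
have sP : s \in filter P r by rewrite mem_filter /P sR lexx -rootE.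
have rP0 : filter P r != [::] by apply: contraTneq sP => ->.
have rPR : all (mem Num.real) (filter P r).
  by apply/allP => z; rewrite mem_filter => /andP [/andP [zR _] _].
have [m + maxm] := exists_max_real rP0 rPR.
rewrite mem_filter => /andP [/andP [mR sm] rm].
exists m; split; rewrite ?rootE // => z pz zR.
have [sz | zs] := real_leP sR zR; last exact: le_trans (ltW zs) sm.
by apply: maxm; rewrite mem_filter /P zR sz -rootE.
Qed.

Lemma ge0_approx z :
  (forall e, 0 < e -> exists2 y, 0 <= y & `|z - y| <= e) -> 0 <= z.
Proof.
move=> approx; suff: `|z| - z = 0 by move/eqP; rewrite subr_eq0 => /eqP <-.
apply/eqP; rewrite -normr_le0; apply/ler_addgt0Pr => e e0; rewrite add0r.
have [y y0 zy] := approx _ (divr_gt0 e0 (ltr0Sn _ 1)).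
have -> : `|z| - z = (`|z| - `|y|) + (y - z) by rewrite (ger0_norm y0) addrA subrK.
rewrite (le_trans (ler_normD _ _)) // [leRHS](splitr e) lerD //.
  exact: le_trans (ler_dist_dist _ _) zy.
by rewrite distrC.
Qed.

Lemma horner_norm_bounded q s :
  exists2 H, 0 < H & forall x, `|x - s| <= 1 -> `|q.[x]| <= H.
Proof.
exists (1 + \sum_(i < size q) `|q`_i| * (`|s| + 1) ^+ i).
  by rewrite ltr_pwDl ?ltr01 // sumr_ge0 // => i _; rewrite mulr_ge0 ?exprn_ge0 ?addr_ge0.
move=> x xs; rewrite horner_coef (le_trans (ler_norm_sum _ _ _)) //.
apply: ler_wpDl ler01 _; apply: ler_sum => i _.
rewrite normrM normrX ler_wpM2l // lerXn2r ?nnegrE ?addr_ge0 //.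
by rewrite -{1}(subrK s x) addrC (le_trans (ler_normD _ _)) ?lerD2l.
Qed.

Lemma horner_ge0_right p s : s \is Num.real ->
  (forall x, x \is Num.real -> s < x -> x < s + 1 -> 0 <= p.[x]) -> 0 <= p.[s].
Proof.
move=> sR right_ge0.
have [q pq] : exists q, forall x, p.[x] = p.[s] + q.[x] * (x - s).
  have /factor_theorem [q Eq] : root (p - p.[s]%:P) s.
    by rewrite /root !hornerE subrr.
  exists q => x; have := congr1 (horner^~ x) Eq.
  by rewrite !hornerE => <-; rewrite addrC subrK.
have [H H0 qH] := horner_norm_bounded q s.
apply: ge0_approx => e e0.
have He0 : 0 < H + e by rewrite addr_gt0.
set c := e / (H + e).
have c0 : 0 < c by rewrite divr_gt0.
have c1 : c < 1 by rewrite ltr_pdivrMr // mul1r ltr_pwDl.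
exists p.[s + c].
  apply: right_ge0; first exact: rpredD sR (gtr0_real c0).
    by rewrite ltrDl.
  by rewrite ltrD2l.
have cs : `|s + c - s| <= 1 by rewrite [s + c - s]addrC addKr gtr0_norm // ltW.
rewrite (pq (s + c)) opprD addrA subrr add0r normrN normrM [s + c - s]addrC addKr.
rewrite (gtr0_norm c0) mulrC; apply: le_trans (ler_wpM2l (ltW c0) (qH _ cs)) _.
by rewrite /c mulrAC ler_pdivrMr // ler_pM2l // lerDl ltW.
Qed.

Lemma poly_eq0_horner p : (forall x, p.[x] = 0) -> p = 0.
Proof.
move=> p_eq0; apply: (@roots_geq_poly_eq0 _ _ [seq i%:R | i <- iota 0 (size p)]).
- by apply/allP => _ /mapP [i _ ->]; rewrite /root p_eq0.
- by rewrite map_inj_uniq ?iota_uniq // => i j /eqP; rewrite eqr_nat => /eqP.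
- by rewrite size_map size_iota.
Qed.

End RealPolynomials.

Section ShiftedDeterminants.
Variable C : numClosedFieldType.

Lemma horner_char_poly_mx n (A : 'M[C]_n) u :
  map_mx (horner_eval u) (char_poly_mx A) = u%:M - A.
Proof.
apply/matrixP => i j.
by rewrite !mxE horner_evalE hornerD hornerN hornerC hornerMn hornerX.
Qed.

Lemma horner_char_poly n (A : 'M[C]_n) u : (char_poly A).[u] = \det (u%:M - A).
Proof. by rewrite -horner_char_poly_mx det_map_mx. Qed.

Lemma horner_adj_char_poly_mx n (A : 'M[C]_n) u i j :
  (\adj (char_poly_mx A) i j).[u] = \adj (u%:M - A) i j.
Proof. by rewrite -horner_char_poly_mx -map_mx_adj [RHS]mxE. Qed.

Lemma shift_block_mx n (A : 'M[C]_(1 + n)) u : u%:M - A =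
  block_mx (u%:M - ulsubmx A) (- ursubmx A) (- dlsubmx A) (u%:M - drsubmx A).
Proof.
by rewrite -{1}[A]submxK (scalar_mx_block 1 n u) opp_block_mx add_block_mx !sub0r.
Qed.

Lemma det_block_schur n (M : 'M[C]_(1 + n)) : \det (drsubmx M) != 0 ->
  \det M = ulsubmx M 0 0 * \det (drsubmx M)
           - (ursubmx M *m \adj (drsubmx M) *m dlsubmx M) 0 0.
Proof.
set a := ulsubmx M; set b := ursubmx M; set c := dlsubmx M; set D := drsubmx M.
move=> D0; have Du : D \in unitmx by rewrite unitmxE unitfE.
have -> : M = block_mx 1%:M (b *m invmx D) 0 1%:M *m
               block_mx (a - b *m invmx D *m c) 0 c D.
  by rewrite mulmx_block !mul1mx !mul0mx !add0r mulmxKV // subrK submxK.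
rewrite det_mulmx det_ublock det_lblock !det1 !mul1r det_mx11.
have -> : (a - b *m invmx D *m c) 0 0
    = a 0 0 - (\det D)^-1 * (b *m \adj D *m c) 0 0.
  by rewrite mxE mxE /invmx Du -scalemxAr -scalemxAl !mxE.
by rewrite mulrBl mulrAC mulVf // mul1r mulrC.
Qed.

(* Both sides are polynomials in u that agree, by det_block_schur, off the
   finitely many roots of the characteristic polynomial of the lower block. *)
Lemma det_shift_block n (A : 'M[C]_(1 + n)) u :
  \det (u%:M - A) = (u - ulsubmx A 0 0) * \det (u%:M - drsubmx A)
     - (ursubmx A *m \adj (u%:M - drsubmx A) *m dlsubmx A) 0 0.
Proof.
set a := ulsubmx A; set b := ursubmx A; set c := dlsubmx A; set D := drsubmx A.
pose Q := char_poly A - (('X - (a 0 0)%:P) * char_poly D -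
  \sum_j (\sum_i (b 0 i)%:P * \adj (char_poly_mx D) i j) * (c j 0)%:P).
have QE x : Q.[x] = \det (x%:M - A) - ((x - a 0 0) * \det (x%:M - D)
    - (b *m \adj (x%:M - D) *m c) 0 0).
  rewrite /Q !hornerE !horner_char_poly; congr (_ - (_ - _)).
  rewrite horner_sum [RHS]mxE; apply: eq_bigr => j _.
  rewrite hornerM hornerC horner_sum [in RHS]mxE; congr (_ * _).
  by apply: eq_bigr => i _; rewrite !hornerE horner_adj_char_poly_mx.
suff /(congr1 (horner^~ u)) : Q = 0.
  by rewrite QE horner0 => /eqP; rewrite subr_eq0 => /eqP.
have charD0 : char_poly D != 0 by rewrite monic_neq0 ?char_poly_monic.
suff /eqP : Q * char_poly D = 0 by rewrite mulf_eq0 (negbTE charD0) orbF => /eqP.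
apply: poly_eq0_horner => x; rewrite hornerM horner_char_poly.
have [-> | Dx0] := eqVneq (\det (x%:M - D)) 0; first by rewrite mulr0.
rewrite QE shift_block_mx det_block_schur ?block_mxKdr //.
rewrite block_mxKul block_mxKur block_mxKdl mulmxN !mulNmx opprK !mxE eqxx.
by rewrite mulr1n subrr mul0r.
Qed.

End ShiftedDeterminants.

Section NonnegativeMatrices.
Variable C : numClosedFieldType.

Lemma nonnegmxD m n (X Y : 'M[C]_(m, n)) :
  nonnegmx X -> nonnegmx Y -> nonnegmx (X + Y).
Proof. by move=> X0 Y0 i j; rewrite mxE addr_ge0. Qed.

Lemma nonnegmxM m n p (X : 'M[C]_(m, n)) (Y : 'M[C]_(n, p)) :
  nonnegmx X -> nonnegmx Y -> nonnegmx (X *m Y).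
Proof. by move=> X0 Y0 i j; rewrite mxE sumr_ge0 // => k _; rewrite mulr_ge0. Qed.

Lemma nonnegmxZ m n (k : C) (X : 'M[C]_(m, n)) :
  0 <= k -> nonnegmx X -> nonnegmx (k *: X).
Proof. by move=> k0 X0 i j; rewrite mxE mulr_ge0. Qed.

Lemma nonnegmxZ_gt0 m n (k : C) (X : 'M[C]_(m, n)) :
  0 < k -> nonnegmx (k *: X) -> nonnegmx X.
Proof. by move=> k0 kX0 i j; have := kX0 i j; rewrite mxE pmulr_rge0. Qed.

Lemma nonnegmx_tr m n (X : 'M[C]_(m, n)) : nonnegmx X -> nonnegmx X^T.
Proof. by move=> X0 i j; rewrite mxE. Qed.

Lemma nonnegmx_real m n (X : 'M[C]_(m, n)) : nonnegmx X -> real_entries_mx X.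
Proof. by move=> X0 i j; rewrite ger0_real. Qed.

Lemma real_entries_conj m n (X : 'M[C]_(m, n)) :
  real_entries_mx X -> map_mx conjC X = X.
Proof. by move=> XR; apply/matrixP => i j; rewrite mxE (conj_Creal (XR i j)). Qed.

Section Blocks.
Variables (m1 m2 n1 n2 : nat) (X : 'M[C]_(m1 + m2, n1 + n2)).
Hypothesis X0 : nonnegmx X.

Lemma nonnegmx_ursub : nonnegmx (ursubmx X).
Proof. by move=> i j; rewrite !mxE; apply: X0. Qed.

Lemma nonnegmx_dlsub : nonnegmx (dlsubmx X).
Proof. by move=> i j; rewrite !mxE; apply: X0. Qed.

Lemma nonnegmx_drsub : nonnegmx (drsubmx X).
Proof. by move=> i j; rewrite !mxE; apply: X0. Qed.

End Blocks.

(* In Collatz's terminology, B is monotone when B x >= 0 implies x >= 0. *)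
Definition monotone_mx d (B : 'M[C]_d) :=
  forall p (x : 'M[C]_(d, p)), nonnegmx (B *m x) -> nonnegmx x.

Definition no_real_eigenvalue_ge d (A : 'M[C]_d) (t : C) :=
  t \is Num.real /\ forall u, u \is Num.real -> t <= u -> \det (u%:M - A) != 0.

Lemma det_shift_gt0 d (A : 'M[C]_d) t :
  real_entries_mx A -> no_real_eigenvalue_ge A t -> 0 < \det (t%:M - A).
Proof.
move=> AR [tR noroot]; rewrite -horner_char_poly.
apply: monic_real_poly_gt0 => //; first exact: char_poly_monic.
  by rewrite map_char_poly real_entries_conj.
move=> z Az zR; rewrite real_ltNge //; apply/negP => tz.
by have := noroot z zR tz; rewrite -horner_char_poly (eqP Az) eqxx.
Qed.

Lemma adj_nonneg d (B : 'M[C]_d) :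
  monotone_mx B -> 0 <= \det B -> nonnegmx (\adj B).
Proof. by move=> Bmono B0; apply: Bmono => i j; rewrite mul_mx_adj mxE mulrn_wge0. Qed.

Section MonotoneInduction.
Variable n : nat.
Hypothesis monotone_shift_n : forall (A : 'M[C]_n) t,
  nonnegmx A -> no_real_eigenvalue_ge A t -> monotone_mx (t%:M - A).

Lemma adj_shift_nonneg (B : 'M[C]_n) s : nonnegmx B -> s \is Num.real ->
  (forall u, u \is Num.real -> s < u -> \det (u%:M - B) != 0) ->
  nonnegmx (\adj (s%:M - B)).
Proof.
move=> B0 sR noroot i j; rewrite -horner_adj_char_poly_mx.
apply: horner_ge0_right => // u uR su _; rewrite horner_adj_char_poly_mx.
have Bu : no_real_eigenvalue_ge B u.
  by split=> // w wR uw; apply: noroot; last exact: lt_le_trans uw.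
apply: adj_nonneg; first exact: monotone_shift_n.
exact/ltW/det_shift_gt0/Bu/nonnegmx_real.
Qed.

Variables (A : 'M[C]_(1 + n)) (t : C).
Hypotheses (A0 : nonnegmx A) (At : no_real_eigenvalue_ge A t).

(* At the largest real eigenvalue s0 of the lower block, the expansion
   det_shift_block would make det (s0 - A) <= 0. *)
Lemma no_real_eigenvalue_ge_drsub : no_real_eigenvalue_ge (drsubmx A) t.
Proof.
have [tR noroot] := At; split=> // s sR ts; apply/negP => /eqP Ds.
set D := drsubmx A.
have rootDs : root (char_poly D) s by rewrite /root horner_char_poly Ds.
have [|s0 [s0R rootDs0 ss0 maxs0]] := max_real_root _ rootDs sR.
  by rewrite monic_neq0 ?char_poly_monic.
have adjD0 : nonnegmx (\adj (s0%:M - D)).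
  apply: adj_shift_nonneg => //; first exact: nonnegmx_drsub.
  move=> u uR s0u; apply/negP => /eqP Du.
  have : u <= s0 by apply: maxs0; rewrite // /root horner_char_poly Du.
  by move/(lt_le_trans s0u); rewrite ltxx.
have : 0 < \det (s0%:M - A).
  apply: det_shift_gt0; first exact: nonnegmx_real.
  by split=> // u uR s0u; apply: noroot; rewrite // (le_trans ts) ?(le_trans ss0).
rewrite det_shift_block -horner_char_poly (eqP rootDs0) mulr0 sub0r oppr_gt0.
move=> /lt_geF/negbT/negP; apply.
exact: (nonnegmxM (nonnegmxM (nonnegmx_ursub A0) adjD0) (nonnegmx_dlsub A0)).
Qed.

Lemma monotone_shift_block : monotone_mx (t%:M - A).
Proof.
move=> p x Ax0.
set a := ulsubmx A; set b := ursubmx A; set c := dlsubmx A; set D := drsubmx A.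
have D0 : nonnegmx D by apply: nonnegmx_drsub.
have Dt := no_real_eigenvalue_ge_drsub.
have detD_gt0 : 0 < \det (t%:M - D) by apply/det_shift_gt0/Dt/nonnegmx_real.
have adjD0 : nonnegmx (\adj (t%:M - D)).
  exact/adj_nonneg/ltW/detD_gt0/monotone_shift_n.
have detA_gt0 : 0 < \det (t%:M - A) by apply/det_shift_gt0/At/nonnegmx_real.
set x0 := usubmx x; set x1 := dsubmx x.
set y := (t%:M - A) *m x; set y0 := usubmx y; set y1 := dsubmx y.
have yE : y = col_mx ((t%:M - a) *m x0 - b *m x1) (- (c *m x0) + (t%:M - D) *m x1).
  by rewrite /y shift_block_mx -[x in _ *m x]vsubmxK mul_block_col !mulNmx.
have y0E : y0 = (t%:M - a) *m x0 - b *m x1 by rewrite /y0 yE col_mxKu.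
have y1E : y1 = - (c *m x0) + (t%:M - D) *m x1 by rewrite /y1 yE col_mxKd.
have y00 : nonnegmx y0 by move=> i j; rewrite mxE; apply: Ax0.
have y10 : nonnegmx y1 by move=> i j; rewrite mxE; apply: Ax0.
(* Cramer's rule for the lower block, then for the Schur complement. *)
have x1E : \det (t%:M - D) *: x1 = \adj (t%:M - D) *m (y1 + c *m x0).
  by rewrite y1E addrAC addNr add0r mulmxA mul_adj_mx mul_scalar_mx.
have x0E : \det (t%:M - A) *: x0
    = \det (t%:M - D) *: y0 + b *m \adj (t%:M - D) *m y1.
  have -> : b *m \adj (t%:M - D) *m y1 =
      b *m (\adj (t%:M - D) *m (y1 + c *m x0)) - (b *m \adj (t%:M - D) *m c) *m x0.
    by rewrite !mulmxDr !mulmxA addrK.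
  rewrite -x1E y0E scalerBr -scalemxAr addrA subrK.
  rewrite [b *m _ *m c]mx11_scalar mul_scalar_mx [t%:M - a]mx11_scalar.
  rewrite mul_scalar_mx scalerA -scalerBl det_shift_block !mxE eqxx mulr1n.
  by rewrite [_ * (t - _)]mulrC.
have x00 : nonnegmx x0.
  apply: nonnegmxZ_gt0 detA_gt0 _; rewrite x0E.
  apply: nonnegmxD; first exact: nonnegmxZ (ltW detD_gt0) y00.
  exact: nonnegmxM (nonnegmxM (nonnegmx_ursub A0) adjD0) y10.
have x10 : nonnegmx x1.
  apply: nonnegmxZ_gt0 detD_gt0 _; rewrite x1E.
  exact: nonnegmxM adjD0 (nonnegmxD y10 (nonnegmxM (nonnegmx_dlsub A0) x00)).
move=> i j; rewrite -[x]vsubmxK mxE; case: splitP => k _; [exact: x00 | exact: x10].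
Qed.

End MonotoneInduction.

Lemma monotone_shift d (A : 'M[C]_d) t :
  nonnegmx A -> no_real_eigenvalue_ge A t -> monotone_mx (t%:M - A).
Proof.
elim: d A t => [|n IHn] A t A0 At; first by move=> p x _ [].
exact: monotone_shift_block.
Qed.

End NonnegativeMatrices.

Section Vectors.
Variable C : numClosedFieldType.

Lemma eigenvalue_colP n (X : 'M[C]_n) l :
  eigenvalue X l <-> exists2 z : 'cV[C]_n, z != 0 & X *m z = l *: z.
Proof.
have charT : char_poly X^T = char_poly X.
  rewrite /char_poly -det_tr; congr (\det _).
  by apply/matrixP => i j; rewrite !mxE eq_sym.
rewrite eigenvalue_root_char -charT -eigenvalue_root_char; split.
  move=> /eigenvalueP [v Xv v0]; exists v^T; first by rewrite trmx_eq0.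
  by rewrite -[X]trmxK -trmx_mul Xv linearZ.
move=> [z z0 Xz]; apply/eigenvalueP; exists z^T; last by rewrite trmx_eq0.
by rewrite -trmx_mul Xz linearZ.
Qed.

Definition sqnorm n (y : 'cV[C]_n) := \sum_i `|y i 0| ^+ 2.

Lemma sqnorm_gt0 n (y : 'cV[C]_n) : y != 0 -> 0 < sqnorm y.
Proof.
move=> y0; have [i yi0] : exists i, y i 0 != 0.
  apply/existsP; apply: contraR y0 => /existsPn y0; apply/eqP/matrixP => i j.
  by rewrite ord1 mxE; apply/eqP/negbNE.
rewrite /sqnorm (bigD1 i) //= ltr_pwDl ?exprn_gt0 ?normr_gt0 //.
by rewrite sumr_ge0 // => k _; rewrite exprn_ge0.
Qed.

Lemma sqnorm_le n (y z : 'cV[C]_n) :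
  (forall i, `|y i 0| <= `|z i 0|) -> sqnorm y <= sqnorm z.
Proof. by move=> yz; apply: ler_sum => i _; rewrite lerXn2r ?nnegrE. Qed.

Lemma sqnorm_norm n (y : 'cV[C]_n) : sqnorm (map_mx normr y) = sqnorm y.
Proof. by apply: eq_bigr => i _; rewrite mxE normr_id. Qed.

Lemma sqnorm_real n (y : 'cV[C]_n) :
  real_entries_mx y -> sqnorm y = \sum_i y i 0 ^+ 2.
Proof. by move=> yR; apply: eq_bigr => i _; rewrite real_normK. Qed.

Lemma sqnormE n (y : 'cV[C]_n) : (y^t* *m y) 0 0 = sqnorm y.
Proof. by rewrite mxE; apply: eq_bigr => i _; rewrite !mxE normCKC. Qed.

Lemma frob_col n (y : 'cV[C]_n) : real_entries_mx y -> frob y = sqrtC (sqnorm y).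
Proof.
move=> yR; rewrite sqnorm_real // /frob; congr sqrtC.
by apply: eq_bigr => i _; rewrite big_ord1.
Qed.

Lemma real_sqr_ge0 (x : C) : x \is Num.real -> 0 <= x ^+ 2.
Proof. by move=> xR; rewrite -real_normK // exprn_ge0. Qed.

Lemma cauchy_schwarz_real n (a b : 'I_n -> C) :
  (forall i, a i \is Num.real) -> (forall i, b i \is Num.real) ->
  (\sum_i a i * b i) ^+ 2 <= (\sum_i a i ^+ 2) * (\sum_i b i ^+ 2).
Proof.
move=> aR bR; pose f j k := a j ^+ 2 * b k ^+ 2 - a j * b j * (a k * b k).
(* Lagrange's identity: twice the gap is a sum of squares. *)
have gapE : (\sum_i a i ^+ 2) * (\sum_i b i ^+ 2) - (\sum_i a i * b i) ^+ 2 =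
    \sum_j \sum_k f j k.
  rewrite expr2 mulr_suml [X in _ - X]mulr_suml -sumrB; apply: eq_bigr => j _.
  by rewrite !mulr_sumr -sumrB.
have gap2 : 0 <= (\sum_j \sum_k f j k) *+ 2.
  rewrite mulr2n [X in _ + X]exchange_big -big_split /=; apply: sumr_ge0 => j _.
  rewrite -big_split /=; apply: sumr_ge0 => k _.
  have -> : f j k + f k j = (a j * b k - a k * b j) ^+ 2 by rewrite /f; ring.
  by apply: real_sqr_ge0; rewrite rpredB ?rpredM.
by rewrite -subr_ge0 gapE; move: gap2; rewrite -mulr_natr pmulr_lge0.
Qed.

Lemma cauchy_schwarz n (e z : 'I_n -> C) : (forall i, e i \is Num.real) ->
  `|\sum_j e j * z j| ^+ 2 <= (\sum_j e j ^+ 2) * (\sum_j `|z j| ^+ 2).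
Proof.
move=> eR; apply: le_trans (_ : (\sum_j `|e j| * `|z j|) ^+ 2 <= _).
  apply: lerXn2r; rewrite ?nnegrE //.
    by apply: sumr_ge0 => j _; rewrite mulr_ge0.
  by rewrite (le_trans (ler_norm_sum _ _ _)) // ler_sum // => j _; rewrite normrM.
have -> : \sum_j e j ^+ 2 = \sum_j `|e j| ^+ 2.
  by apply: eq_bigr => j _; rewrite real_normK.
by apply: cauchy_schwarz_real => j; apply: normr_real.
Qed.

Lemma sqnorm_mul_le n (E : 'M[C]_n) (w : 'cV[C]_n) : real_entries_mx E ->
  sqnorm (E *m w) <= (\sum_i \sum_j E i j ^+ 2) * sqnorm w.
Proof.
move=> ER; rewrite mulr_suml; apply: ler_sum => i _; rewrite mxE.
exact: cauchy_schwarz (fun j => ER i j).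
Qed.

End Vectors.

Section Rayleigh.
Variables (C : numClosedFieldType) (n : nat) (M : 'M[C]_n) (mu : C).
Hypothesis M_normal : M \is normalmx.

Let P := spectralmx M.
Let sp := spectral_diag M.

Let PPt : P *m P^t* = 1%:M.
Proof. exact/unitarymxP/spectral_unitarymx. Qed.

Let shiftE : M - mu%:M = P^t* *m diag_mx (\row_k (sp 0 k - mu)) *m P.
Proof.
have diagE : diag_mx (\row_k (sp 0 k - mu)) = diag_mx sp - mu%:M.
  by apply/matrixP => i j; rewrite !mxE mulrnBl.
rewrite diagE mulmxBr mulmxBl -invmx_unitary ?spectral_unitarymx //.
rewrite -(orthomx_spectralP M_normal) mul_mx_scalar -scalemxAl.
by rewrite mulVmx ?spectral_unit ?scalemx1.
Qed.

Lemma spectral_diag_eigenvalue k : eigenvalue M (sp 0 k).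
Proof.
apply/eigenvalueP; exists (row k P).
  have PM : P *m M = diag_mx sp *m P.
    by rewrite [in LHS](orthomx_spectralP M_normal) !mulmxA mulmxV ?spectral_unit ?mul1mx.
  by rewrite -row_mul PM row_mul row_diag_mx -scalemxAl -rowE.
apply/eqP => /(congr1 (fun v => v *m P^t*)); rewrite -row_mul PPt mul0mx.
by move/rowP/(_ k); rewrite !mxE eqxx /= => /eqP; rewrite oner_eq0.
Qed.

Hypothesis mu_le : forall l, eigenvalue M l -> mu <= l.

Let quadE (x : 'cV[C]_n) : (x^t* *m (M - mu%:M) *m x) 0 0 =
  \sum_k (sp 0 k - mu) * `|(P *m x) k 0| ^+ 2.
Proof.
rewrite shiftE -!mulmxA mulmxA -map_mxM -trmx_mul mxE; apply: eq_bigr => k _.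
rewrite [(diag_mx _ *m _) k 0]mxE (bigD1 k) //= big1 ?addr0.
  by rewrite !mxE eqxx mulr1n normCK mulrCA mulrA mulrC mulrCA.
by move=> j /negbTE jk; rewrite !mxE eq_sym jk mulr0n mul0r.
Qed.

Let quad_term_ge0 (x : 'cV[C]_n) k : 0 <= (sp 0 k - mu) * `|(P *m x) k 0| ^+ 2.
Proof. by rewrite mulr_ge0 ?exprn_ge0 ?subr_ge0 ?mu_le ?spectral_diag_eigenvalue. Qed.

Lemma rayleigh_ge0 (x : 'cV[C]_n) : 0 <= (x^t* *m (M - mu%:M) *m x) 0 0.
Proof. by rewrite quadE sumr_ge0. Qed.

Lemma rayleigh_eq0 (x : 'cV[C]_n) :
  (x^t* *m (M - mu%:M) *m x) 0 0 = 0 -> M *m x = mu *: x.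
Proof.
rewrite quadE => /psumr_eq0P termE.
apply/eqP; rewrite -subr_eq0 -mul_scalar_mx -mulmxBl shiftE -!mulmxA.
suff -> : diag_mx (\row_k (sp 0 k - mu)) *m (P *m x) = 0 by rewrite !mulmx0.
apply/matrixP => i j; rewrite ord1 mxE [RHS]mxE (bigD1 i) //= big1 ?addr0.
- rewrite mxE eqxx mulr1n mxE.
  have /eqP := termE (fun k _ => quad_term_ge0 x k) i isT.
  by rewrite mulf_eq0 expf_eq0 /= normr_eq0 => /orP [] /eqP ->; rewrite ?mul0r ?mulr0.
- by move=> k /negbTE ki; rewrite !mxE eq_sym ki mulr0n mul0r.
Qed.

End Rayleigh.

Section SpectralRadius.
Variables (C : numClosedFieldType) (d : nat) (A : 'M[C]_d).

Lemma spec_rad_lt_no_real_eigenvalue_ge t :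
  0 <= t -> spec_rad_lt A t -> no_real_eigenvalue_ge A t.
Proof.
move=> t0 rhoA; split=> [|u uR tu]; first exact: ger0_real.
apply/negP => /eqP Au.
have /rhoA : eigenvalue A u by rewrite eigenvalue_root_char /root horner_char_poly Au.
by rewrite ger0_norm ?(le_trans t0) // => /lt_le_trans/(_ tu); rewrite ltxx.
Qed.

Lemma no_real_eigenvalue_ge_tr t :
  no_real_eigenvalue_ge A t -> no_real_eigenvalue_ge A^T t.
Proof.
move=> [tR noroot]; split=> // u uR tu.
have -> : u%:M - A^T = (u%:M - A)^T by rewrite linearB /= tr_scalar_mx.
by rewrite det_tr noroot.
Qed.

(* If |l| >= 1, then |(l - A) z| >= |z| - A |z| entrywise; monotonicity of
   1 - A turns this into a bound on |z|. *)
Lemma normr_le_shift_solution (z h : 'cV[C]_d) l :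
  nonnegmx A -> monotone_mx (1%:M - A) -> 1 <= `|l| ->
  (1%:M - A) *m h = map_mx normr ((l%:M - A) *m z) ->
  forall i, `|z i 0| <= h i 0.
Proof.
move=> A0 Amono l1 hE.
suff /Amono hz0 : nonnegmx ((1%:M - A) *m (h - map_mx normr z)).
  by move=> i; have := hz0 i 0; rewrite !mxE subr_ge0.
move=> i j; rewrite ord1 mulmxBr hE !mulmxBl mul1mx mul_scalar_mx.
rewrite !mxE subr_ge0; apply: le_trans (lerB_dist _ _).
rewrite normrM lerB ?ler_peMl // (le_trans (ler_norm_sum _ _ _)) // ler_sum // => k _.
by rewrite normrM ger0_norm // mxE.
Qed.

End SpectralRadius.

Section ClosestMatrix.
Variables (C : numClosedFieldType) (d : nat) (A : 'M[C]_d) (mu : C).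
Hypotheses (A0 : nonnegmx A) (rhoA : spec_rad_lt A 1).

Let B := 1%:M - A.
Let M := (1%:M - A^T) *m B.
Hypothesis mu_min : smallest_eigenvalue M mu.
Let mu_eigen : eigenvalue M mu := mu_min.1.
Let mu_le : forall l, eigenvalue M l -> mu <= l := mu_min.2.

Let A1 : no_real_eigenvalue_ge A 1 := spec_rad_lt_no_real_eigenvalue_ge ler01 rhoA.

Let B_unit : B \in unitmx.
Proof.
by rewrite unitmxE unitfE gt_eqF //; apply: det_shift_gt0 (nonnegmx_real A0) A1.
Qed.

Let BtE : B^t* = 1%:M - A^T.
Proof.
rewrite real_entries_conj ?linearB /= ?trmx1 // => i j.
by rewrite !mxE rpredB ?rpredMn ?real1 ?nonnegmx_real.
Qed.

Let quad_M (x : 'cV[C]_d) : (x^t* *m M *m x) 0 0 = sqnorm (B *m x).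
Proof. by rewrite /M -BtE mulmxA -map_mxM -trmx_mul -mulmxA sqnormE. Qed.

Let M_normal : M \is normalmx.
Proof.
have Mt : M^t* = M by rewrite /M -BtE trmx_mul map_mxM trmxCK.
by apply/normalmxP; rewrite Mt.
Qed.

Let quad_shift (x : 'cV[C]_d) :
  (x^t* *m (M - mu%:M) *m x) 0 0 = sqnorm (B *m x) - mu * sqnorm x.
Proof.
rewrite mulmxBr mulmxBl mul_mx_scalar -scalemxAl.
by rewrite [LHS]mxE [X in _ + X]mxE [X in _ - X]mxE quad_M sqnormE.
Qed.

Lemma sqnorm_shift_ge (x : 'cV[C]_d) : mu * sqnorm x <= sqnorm (B *m x).
Proof. by rewrite -subr_ge0 -quad_shift (rayleigh_ge0 M_normal mu_le). Qed.

Lemma eigenvector_of_sqnorm_shift_le (x : 'cV[C]_d) :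
  sqnorm (B *m x) <= mu * sqnorm x -> M *m x = mu *: x.
Proof.
move=> Bx_le; apply: (rayleigh_eq0 M_normal mu_le); apply/eqP.
by rewrite eq_le (rayleigh_ge0 M_normal mu_le) andbT quad_shift subr_le0.
Qed.

Let sqnorm_shift_gt0 (x : 'cV[C]_d) : x != 0 -> 0 < sqnorm (B *m x).
Proof.
move=> x0; apply: sqnorm_gt0; apply: contra_neq x0 => Bx0.
by rewrite -[x]mul1mx -(mulVmx B_unit) -mulmxA Bx0 mulmx0.
Qed.

Let sqnorm_eigenvector (x : 'cV[C]_d) :
  M *m x = mu *: x -> sqnorm (B *m x) = mu * sqnorm x.
Proof. by move=> Mx; rewrite -quad_M -mulmxA Mx -scalemxAr mxE sqnormE. Qed.

Lemma mu_gt0 : 0 < mu.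
Proof.
have /eigenvalue_colP [z z0 Mz] := mu_eigen.
have := sqnorm_shift_gt0 z0; rewrite sqnorm_eigenvector //.
by rewrite pmulr_lgt0 // sqnorm_gt0.
Qed.

Lemma nonneg_eigenvector :
  exists v : 'cV[C]_d, [/\ nonnegmx v, frob v = 1 & M *m v = mu *: v].
Proof.
have /eigenvalue_colP [z z0 Mz] := mu_eigen.
set h := invmx B *m map_mx normr (B *m z).
have Bh : B *m h = map_mx normr (B *m z) by rewrite mulmxA mulmxV ?mul1mx.
have zh : forall i, `|z i 0| <= h i 0.
  by apply: (normr_le_shift_solution A0 (monotone_shift A0 A1) _ Bh); rewrite normr1.
have h0 : nonnegmx h by move=> i j; rewrite ord1 (le_trans _ (zh i)).
have hR : real_entries_mx h := nonnegmx_real h0.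
have zh_sq : sqnorm z <= sqnorm h.
  by apply: sqnorm_le => i; rewrite (ger0_norm (h0 i 0)).
have Mh : M *m h = mu *: h.
  apply: eigenvector_of_sqnorm_shift_le.
  by rewrite Bh sqnorm_norm (sqnorm_eigenvector Mz) ler_pM2l ?mu_gt0.
have h_gt0 : 0 < sqnorm h := lt_le_trans (sqnorm_gt0 z0) zh_sq.
set k := (sqrtC (sqnorm h))^-1.
have k0 : 0 < k by rewrite invr_gt0 sqrtC_gt0.
exists (k *: h); split; first exact: nonnegmxZ (ltW k0) h0.
  rewrite frob_col => [|i j]; last by rewrite mxE rpredM ?hR ?gtr0_real.
  rewrite /sqnorm; under eq_bigr => i _ do rewrite mxE normrM exprMn (gtr0_norm k0).
  rewrite -mulr_sumr -[\sum__ _]/(sqnorm h) exprVn sqrtCK mulVf ?sqrtC1 //.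
  by rewrite gt_eqF.
by rewrite -(scalemxAr k M h) Mh !scalerA mulrC.
Qed.

Section Witness.
Variable v : 'cV[C]_d.
Hypotheses (v0 : nonnegmx v) (v1 : frob v = 1) (Mv : M *m v = mu *: v).

Let r := sqrtC mu.
Let u := r^-1 *: ((1%:M - A) *m v).
Let X := A + r *: (u *m v^T).

Let r_gt0 : 0 < r. Proof. by rewrite sqrtC_gt0 mu_gt0. Qed.

Let vR : real_entries_mx v := nonnegmx_real v0.

Let sqnorm_v : sqnorm v = 1.
Proof. by apply: sqrtC_inj; rewrite sqrtC1 -frob_col. Qed.

Let BTu : (1%:M - A^T) *m u = r *: v.
Proof.
rewrite /u -scalemxAr mulmxA -/M Mv scalerA -[mu](sqrtCK mu) -/r expr2.
by rewrite mulKf ?gt_eqF.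
Qed.

Lemma closest_left_vector_nonneg : nonnegmx u.
Proof.
apply: (monotone_shift (nonnegmx_tr A0) (no_real_eigenvalue_ge_tr A1)).
by rewrite BTu; apply: nonnegmxZ (ltW r_gt0) v0.
Qed.

Lemma closest_matrix_nonneg : nonnegmx X.
Proof.
apply: nonnegmxD A0 (nonnegmxZ (ltW r_gt0) _).
exact: nonnegmxM closest_left_vector_nonneg (nonnegmx_tr v0).
Qed.

Lemma closest_matrix_spec_rad_ge1 : spec_rad_ge X 1.
Proof.
have vTv : v^T *m v = 1%:M.
  apply/matrixP => i j; rewrite !ord1 !mxE eqxx mulr1n -sqnorm_v sqnorm_real //.
  by apply: eq_bigr => k _; rewrite mxE expr2.
exists 1; split; last by rewrite normr1.
apply/eigenvalue_colP; exists v.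
  apply: contra_eq_neq sqnorm_v => ->; rewrite /sqnorm big1 ?(eq_sym 0) ?oner_eq0 //.
  by move=> i _; rewrite mxE normr0 expr0n.
rewrite scale1r mulmxDl -scalemxAl -mulmxA vTv mulmx1 /u scalerA mulfV ?gt_eqF //.
by rewrite scale1r mulmxBl mul1mx addrC subrK.
Qed.

Lemma closest_matrix_dist : frob (X - A) = r.
Proof.
have uR : real_entries_mx u := nonnegmx_real closest_left_vector_nonneg.
have sqnorm_u : sqnorm u = 1.
  rewrite /u /sqnorm; under eq_bigr => i _ do rewrite mxE normrM exprMn.
  rewrite -mulr_sumr -[\sum__ _]/(sqnorm _) sqnorm_eigenvector // sqnorm_v.
  by rewrite mulr1 normfV exprVn (gtr0_norm r_gt0) sqrtCK mulVf ?gt_eqF ?mu_gt0.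
rewrite /X addrC addKr /frob -[RHS](sqrCK (ltW r_gt0)); congr sqrtC.
rewrite -[RHS]mulr1 -sqnorm_u sqnorm_real // mulr_sumr; apply: eq_bigr => i _.
rewrite -[RHS]mulr1 -sqnorm_v sqnorm_real // !mulr_sumr; apply: eq_bigr => j _.
by rewrite !mxE big_ord1 !mxE !exprMn mulrA.
Qed.

End Witness.

Lemma sqrt_mu_le_frob_dist (Y : 'M[C]_d) :
  real_entries_mx Y -> spec_rad_ge Y 1 -> sqrtC mu <= frob (Y - A).
Proof.
move=> YR [l [/eigenvalue_colP [w w0 Yw] l1]].
set E := Y - A.
have ER : real_entries_mx E by move=> i j; rewrite !mxE rpredB ?YR ?nonnegmx_real.
set h := invmx B *m map_mx normr (E *m w).
have Bh : B *m h = map_mx normr (E *m w) by rewrite mulmxA mulmxV ?mul1mx.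
have Ew : E *m w = (l%:M - A) *m w by rewrite !mulmxBl Yw mul_scalar_mx.
have wh := normr_le_shift_solution A0 (monotone_shift A0 A1) l1 (etrans Bh (congr1 _ Ew)).
have wh_sq : sqnorm w <= sqnorm h.
  by apply: sqnorm_le => i; rewrite (ger0_norm (le_trans (normr_ge0 _) (wh i))).
have mu_le_E : mu * sqnorm h <= sqnorm (E *m w).
  by rewrite -[sqnorm (E *m w)]sqnorm_norm -Bh sqnorm_shift_ge.
have EE0 : 0 <= \sum_i \sum_j E i j ^+ 2.
  by rewrite !sumr_ge0 // => i _; rewrite sumr_ge0 // => j _; rewrite real_sqr_ge0.
rewrite /frob ler_sqrtC ?nnegrE ?(ltW mu_gt0) //.
rewrite -(ler_pM2r (sqnorm_gt0 w0)) (le_trans _ (sqnorm_mul_le w ER)) //.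
by rewrite (le_trans _ mu_le_E) // ler_pM2l ?mu_gt0.
Qed.

End ClosestMatrix.

Theorem theorem1 (C : numClosedFieldType) (d : nat) (A : 'M[C]_d) (mu : C) :
  nonnegmx A ->
  spec_rad_lt A 1 ->
  smallest_eigenvalue ((1%:M - A^T) *m (1%:M - A)) mu ->
  0 < mu /\
  exists v : 'cV[C]_d,
    [/\ nonnegmx v, frob v = 1,
        ((1%:M - A^T) *m (1%:M - A)) *m v = mu *: v &
        let r := sqrtC mu in
        let u := r^-1 *: ((1%:M - A) *m v) in
        let X := A + r *: (u *m v^T) in
        [/\ nonnegmx u, nonnegmx X, spec_rad_ge X 1, frob (X - A) = r &
            forall Y : 'M[C]_d, real_entries_mx Y -> spec_rad_ge Y 1 -> r <= frob (Y - A)]].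
Proof.
move=> A0 rhoA mu_min; split; first exact: mu_gt0 A0 rhoA mu_min.
have [v [v0 v1 Mv]] := nonneg_eigenvector A0 rhoA mu_min.
exists v; split=> //; split.
- exact (closest_left_vector_nonneg A0 rhoA mu_min v0 Mv).
- exact (closest_matrix_nonneg A0 rhoA mu_min v0 Mv).
- exact (closest_matrix_spec_rad_ge1 A0 rhoA mu_min v0 v1).
- exact (closest_matrix_dist A0 rhoA mu_min v0 v1 Mv).
- exact (sqrt_mu_le_frob_dist A0 rhoA mu_min).
Qed.
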